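(* The unique $F$-coalgebra morphism $\varphi_\Pi:\mathbb DA^\infty\to\Omega$ from $(\mathbb DA^\infty,\Pi)$ to the final $F$-coalgebra $(\Omega,\omega)$ is injective.
   Context: $A$ finite alphabet; $A^\infty=A^*\cup A^\omega$ with $\sigma$-algebra $\Sigma_{A^\infty}$ generated by $S_\infty=\{\emptyset\}\cup\{\{w\}\mid w\in A^*\}\cup\{wA^\infty\mid w\in A^*\}$. $\mathbb I=[0,1]$. $\mathbb DA^\infty$ is the set of sub-probability measures on $(A^\infty,\Sigma_{A^\infty})$, with the $\sigma$-algebra generated by $m\mapsto m(S)$. For $m\in\mathbb DA^\infty$ and $a\in A$, the measure derivative is $m_a(S)=m(aS)$. $F$ is the functor $FX=\mathbb I\times\mathbb I\times X^A$, $Ff=\mathrm{id}\times\mathrm{id}\times f^A$. $\Pi:\mathbb DA^\infty\to F\mathbb DA^\infty$ is $\Pi(m)=\langle m(A^\infty),m(\{\varepsilon\}),a\mapsto m_a\rangle$. $\Omega=(\mathbb I\times\mathbb I)^{A^*}$ with $\omega(L)=\langle L(\varepsilon),a\mapsto L_a\rangle$, $L_a(w)=L(aw)$; $(\Omega,\omega)$ is the final $F$-coalgebra, and an $F$-coalgebra morphism from $(Y,\beta)$ to $(\Omega,\omega)$ is a map $\varphi$ with $\omega\circ\varphi=F\varphi\circ\beta$. *)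

From Stdlib Require Import Reals List.
Open Scope R_scope.
Set Implicit Arguments.

Section Defs.
Variable A : Type.

Definition word : Type := (list A + (nat -> A))%type.

Definition wcons (a : A) (x : word) : word :=
  match x with
  | inl v => inl (a :: v)
  | inr s => inr (fun n => match n with O => a | S k => s k end)
  end.
Definition wprepend (w : list A) (x : word) : word := fold_right wcons x w.

Definition wset : Type := word -> Prop.

Definition emptyset : wset := fun _ => False.
Definition fullset : wset := fun _ => True.
Definition singleton (w : list A) : wset := fun x => x = inl w.
Definition cylinder (w : list A) : wset := fun x => exists y, x = wprepend w y.
Definition prefix_set (a : A) (S : wset) : wset := fun x => exists y, S y /\ x = wcons a y.

Definition generator (S : wset) : Prop :=
  S = emptyset \/ (exists w, S = singleton w) \/ (exists w, S = cylinder w).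

Definition is_sigma_algebra (M : wset -> Prop) : Prop :=
  M emptyset /\
  (forall S, M S -> M (fun x => ~ S x)) /\
  (forall f : nat -> wset, (forall n, M (f n)) -> M (fun x => exists n, f n x)).

Definition measurable (S : wset) : Prop :=
  forall M, is_sigma_algebra M -> (forall G, generator G -> M G) -> M S.

(* a set function; only its values on measurable sets are meaningful *)
Definition setfun : Type := wset -> R.

Definition is_subprob (m : setfun) : Prop :=
  m emptyset = 0 /\
  (forall S, measurable S -> 0 <= m S) /\
  (forall f : nat -> wset,
      (forall n, measurable (f n)) ->
      (forall i j x, i <> j -> f i x -> f j x -> False) ->
      infinite_sum (fun n => m (f n)) (m (fun x => exists n, f n x))) /\
  m fullset <= 1.

Definition mderiv (a : A) (m : setfun) : setfun := fun S => m (prefix_set a S).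

Definition Omega : Type := list A -> (R * R).
Definition Lderiv (a : A) (L : Omega) : Omega := fun w => L (a :: w).

(* phi is an F-coalgebra morphism from (D A^infty, Pi) to (Omega, omega):
   omega (phi m) = F phi (Pi m), i.e.
   (phi m)(eps) = <m(A^infty), m({eps})> and (phi m)_a = phi(m_a) for all a. *)
Definition is_coalg_morphism (phi : setfun -> Omega) : Prop :=
  forall m, is_subprob m ->
    phi m nil = (m fullset, m (singleton nil)) /\
    (forall a, Lderiv a (phi m) = phi (mderiv a m)).

End Defs.

(* Any coalgebra morphism sends m to the function w |-> (m(w A^infty), m({w})): this is
   forced at the empty word and propagates along derivatives because (m_a)(w A^infty) =
   m(aw A^infty) and (m_a)({w}) = m({aw}).  Hence phi m1 = phi m2 means that m1 and m2
   agree on every set of S_infty.  The family S_infty is closed under binary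
   intersection (two cylinders are nested or disjoint) and contains A^infty = eps A^infty,
   so by Dynkin's pi-lambda theorem m1 and m2 agree on all of Sigma_{A^infty}. *)
From Stdlib Require Import Reals List Lia Lra Wf_nat.
From Stdlib Require Import Classical FunctionalExtensionality PropExtensionality.
Open Scope R_scope.
Set Implicit Arguments.

Section SetAlgebra.
Context {A : Type}.
Implicit Types (S T G : wset A) (f : nat -> wset A).

Lemma wset_ext S T : (forall x, S x <-> T x) -> S = T.
Proof.
  intro H; apply functional_extensionality; intro x; apply propositional_extensionality; auto.
Qed.

Definition setI S T : wset A := fun x => S x /\ T x.
Definition setU S T : wset A := fun x => S x \/ T x.
Definition disjoint_family f : Prop := forall i j x, i <> j -> f i x -> f j x -> False.

(* The family S, T, emptyset, emptyset, ... turns binary unions into countable ones. *)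
Definition seq2 S T (n : nat) : wset A :=
  match n with O => S | 1%nat => T | _ => @emptyset A end.

Lemma bigcup_seq2 S T : (fun x => exists n, seq2 S T n x) = setU S T.
Proof.
  apply wset_ext; intro x; split.
  - intros [[|[|n]] Hn]; [left | right | destruct Hn]; auto.
  - intros [H|H]; [exists O | exists 1%nat]; auto.
Qed.

Lemma disjoint_seq2 S T : (forall x, S x -> T x -> False) -> disjoint_family (seq2 S T).
Proof.
  intros H [|[|i]] [|[|j]] x Hij Hi Hj; simpl in *; try contradiction; try lia; eauto.
Qed.

Lemma setI_comm S T : setI S T = setI T S.
Proof. apply wset_ext; intro; unfold setI; tauto. Qed.

Section SigmaAlgebra.
Variable M : wset A -> Prop.
Hypothesis HM : is_sigma_algebra M.

Lemma sigma_fullset : M (@fullset A).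
Proof.
  destruct HM as [H0 [HC _]].
  replace (@fullset A) with (fun x => ~ @emptyset A x) by (apply wset_ext; firstorder).
  auto.
Qed.

Lemma sigma_setU S T : M S -> M T -> M (setU S T).
Proof.
  intros HS HT; rewrite <- bigcup_seq2; destruct HM as [H0 [_ HU]].
  apply HU; intros [|[|n]]; auto.
Qed.

Lemma sigma_setI S T : M S -> M T -> M (setI S T).
Proof.
  intros HS HT; destruct HM as [_ [HC _]].
  replace (setI S T) with (fun x => ~ setU (fun y => ~ S y) (fun y => ~ T y) x).
  - apply HC, sigma_setU; auto.
  - apply wset_ext; intro x; unfold setU, setI; split; [|tauto].
    intro H; split; apply NNPP; tauto.
Qed.

End SigmaAlgebra.

Definition sigma_generated (P : wset A -> Prop) S : Prop :=
  forall M, is_sigma_algebra M -> (forall G, P G -> M G) -> M S.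

Lemma sigma_generated_sigma P : is_sigma_algebra (sigma_generated P).
Proof.
  split; [|split].
  - intros M [H0 _] _; exact H0.
  - intros S HS M HM HG; pose proof HM as [_ [HC _]]; apply HC, HS; auto.
  - intros f Hf M HM HG; pose proof HM as [_ [_ HU]]; apply HU; intro n; apply Hf; auto.
Qed.

Lemma measurable_sigma : is_sigma_algebra (@measurable A).
Proof. exact (sigma_generated_sigma (@generator A)). Qed.

Lemma measurable_generator G : generator G -> measurable G.
Proof. intros HG M _ H; auto. Qed.

Section Dynkin.
Variable P : wset A -> Prop.
Hypothesis P_setI : forall G H, P G -> P H -> P (setI G H).

Definition dynkin_system (L : wset A -> Prop) : Prop :=
  L (@fullset A) /\ (forall S, L S -> L (fun x => ~ S x)) /\
  (forall f, (forall n, L (f n)) -> disjoint_family f -> L (fun x => exists n, f n x)).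

Definition dynkin_generated S : Prop :=
  forall L, dynkin_system L -> (forall G, P G -> L G) -> L S.

Lemma dynkin_generated_system : dynkin_system dynkin_generated.
Proof.
  split; [|split].
  - intros L [H _] _; auto.
  - intros S HS L HL HG; pose proof HL as [_ [HC _]]; apply HC, HS; auto.
  - intros f Hf Hd L HL HG; pose proof HL as [_ [_ HU]]; apply HU; auto.
    intro n; apply Hf; auto.
Qed.

Lemma dynkin_emptyset L : dynkin_system L -> L (@emptyset A).
Proof.
  intros [H1 [HC _]].
  replace (@emptyset A) with (fun x => ~ @fullset A x) by (apply wset_ext; firstorder).
  auto.
Qed.

Lemma dynkin_setU L S T : dynkin_system L -> L S -> L T ->
  (forall x, S x -> T x -> False) -> L (setU S T).
Proof.
  intros HL HS HT HD; rewrite <- bigcup_seq2; pose proof (dynkin_emptyset HL).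
  destruct HL as [_ [_ HU]]; apply HU; [intros [|[|n]]; auto | apply disjoint_seq2; auto].
Qed.

Lemma dynkin_setI_section T : dynkin_generated T ->
  dynkin_system (fun S => dynkin_generated (setI S T)).
Proof.
  intro HT; pose proof dynkin_generated_system as HL; split; [|split].
  - replace (setI (@fullset A) T) with T by (apply wset_ext; firstorder); auto.
  - intros S HS.
    (* relative complement within T, via the disjoint union (S n T) u ~T *)
    replace (setI (fun x => ~ S x) T) with (fun x => ~ setU (setI S T) (fun y => ~ T y) x).
    + pose proof HL as [_ [HC _]]; apply HC, dynkin_setU; auto; unfold setI; tauto.
    + apply wset_ext; intro x; unfold setU, setI; split; [|tauto].
      intro H; split; [tauto | apply NNPP; tauto].
  - intros f Hf Hd.
    replace (setI (fun x => exists n, f n x) T) with (fun x => exists n, setI (f n) T x).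
    + destruct HL as [_ [_ HU]]; apply HU; auto.
      intros i j x Hij [Hi _] [Hj _]; eauto.
    + apply wset_ext; intro x; unfold setI; firstorder.
Qed.

Lemma dynkin_generated_setI S T :
  dynkin_generated S -> dynkin_generated T -> dynkin_generated (setI S T).
Proof.
  intros HS HT; apply (HS (fun S => dynkin_generated (setI S T))).
  - apply dynkin_setI_section; auto.
  - intros G HG; rewrite setI_comm.
    apply (HT (fun T => dynkin_generated (setI T G))).
    + apply dynkin_setI_section; intros L _ H; auto.
    + intros H HH; intros L _ HL; apply HL, P_setI; auto.
Qed.

Lemma dynkin_generated_setU S T :
  dynkin_generated S -> dynkin_generated T -> dynkin_generated (setU S T).
Proof.
  intros HS HT; pose proof dynkin_generated_system as [_ [HC _]].
  replace (setU S T) with (fun x => ~ setI (fun y => ~ S y) (fun y => ~ T y) x).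
  - apply HC, dynkin_generated_setI; auto.
  - apply wset_ext; intro x; unfold setU, setI; split; [|tauto].
    intro H; apply NNPP; tauto.
Qed.

Definition first_union f (n : nat) : wset A := fun x => exists k, (k < n)%nat /\ f k x.

Lemma dynkin_generated_first_union f :
  (forall n, dynkin_generated (f n)) -> forall n, dynkin_generated (first_union f n).
Proof.
  intros Hf n; induction n as [|n IH].
  - replace (first_union f 0) with (@emptyset A).
    + apply dynkin_emptyset, dynkin_generated_system.
    + apply wset_ext; intro; unfold first_union, emptyset; split; [tauto|].
      intros [k [Hk _]]; lia.
  - replace (first_union f (S n)) with (setU (first_union f n) (f n)).
    + apply dynkin_generated_setU; auto.
    + apply wset_ext; intro x; unfold first_union, setU; split.
      * intros [[k [Hk H]]|H]; [exists k | exists n]; split; auto; lia.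
      * intros [k [Hk H]]; destruct (Nat.eq_dec k n) as [->|Hkn]; [right; auto|].
        left; exists k; split; auto; lia.
Qed.

Lemma dynkin_generated_sigma : is_sigma_algebra dynkin_generated.
Proof.
  pose proof dynkin_generated_system as HL; split; [|split].
  - apply dynkin_emptyset; auto.
  - destruct HL as [_ [HC _]]; auto.
  - intros f Hf.
    (* disjointify: keep x in f n only when n is the first index containing x *)
    replace (fun x => exists n, f n x)
      with (fun x => exists n, setI (f n) (fun y => ~ first_union f n y) x).
    + destruct HL as [_ [_ HU]]; apply HU.
      * intro n; apply dynkin_generated_setI; auto.
        pose proof dynkin_generated_system as [_ [HC _]].
        apply HC, dynkin_generated_first_union; auto.
      * intros i j x Hij [Hi Ni] [Hj Nj].
        destruct (Nat.lt_total i j) as [H|[H|H]]; [apply Nj | lia | apply Ni].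
        -- exists i; auto.
        -- exists j; auto.
    + apply wset_ext; intro x; unfold setI, first_union; split; [intros [n [H _]]; eauto|].
      intro Hx; destruct (dec_inh_nat_subset_has_unique_least_element (fun n => f n x))
        as [n [[Hn Hmin] _]]; [intro; apply classic | auto |].
      exists n; split; auto; intros [k [Hk Hfk]]; specialize (Hmin k Hfk); lia.
Qed.

Theorem pi_lambda L : dynkin_system L -> (forall G, P G -> L G) ->
  forall S, sigma_generated P S -> L S.
Proof.
  intros HL HP S HS; apply (HS dynkin_generated); auto.
  - apply dynkin_generated_sigma.
  - intros G HG L' _ HL'; auto.
Qed.

End Dynkin.

End SetAlgebra.

Section SubProbability.
Context {A : Type}.

Section OneMeasure.
Variable m : setfun A.
Hypothesis Hm : is_subprob m.

Lemma subprob_setU S T : measurable S -> measurable T ->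
  (forall x, S x -> T x -> False) -> m (setU S T) = m S + m T.
Proof.
  intros HS HT HD; destruct Hm as [H0 [_ [Hsum _]]].
  rewrite <- bigcup_seq2; eapply uniqueness_sum.
  - apply Hsum; [|apply disjoint_seq2; auto].
    intros [|[|n]]; auto; apply measurable_generator; left; auto.
  - intros eps Heps; exists 1%nat; intros n Hn.
    replace (sum_f_R0 (fun k => m (seq2 S T k)) n) with (m S + m T).
    + unfold R_dist; rewrite Rminus_diag, Rabs_R0; auto.
    + induction n as [|[|n] IH]; [lia | reflexivity |].
      simpl sum_f_R0 in *; rewrite <- IH by lia; simpl; rewrite H0; ring.
Qed.

Lemma subprob_setC S : measurable S -> m (fun x => ~ S x) = m (@fullset A) - m S.
Proof.
  intro HS.
  replace (@fullset A) with (setU S (fun x => ~ S x)).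
  - rewrite subprob_setU; [ring | auto | | tauto].
    pose proof (@measurable_sigma A) as [_ [HC _]]; auto.
  - apply wset_ext; intro x; unfold setU, fullset; split; auto; intros _; apply classic.
Qed.

Lemma subprob_le_fullset S : measurable S -> m S <= m (@fullset A).
Proof.
  intro HS; rewrite <- (Rminus_0_r (m (@fullset A))).
  pose proof Hm as [_ [Hpos _]]; pose proof (@measurable_sigma A) as [_ [HC _]].
  pose proof (Hpos _ (HC S HS)); rewrite subprob_setC in *; auto; lra.
Qed.

End OneMeasure.

Lemma subprob_agreement_dynkin m1 m2 : is_subprob m1 -> is_subprob m2 ->
  m1 (@fullset A) = m2 (@fullset A) ->
  dynkin_system (fun S => measurable S /\ m1 S = m2 S).
Proof.
  intros H1 H2 Hfull; pose proof (@measurable_sigma A) as HM; split; [|split].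
  - split; auto; apply sigma_fullset; auto.
  - intros S [HS E]; pose proof HM as [_ [HC _]]; split; auto.
    rewrite !subprob_setC, E, Hfull; auto.
  - intros f Hf Hd; pose proof HM as [_ [_ HU]].
    assert (Hmeas : forall n, measurable (f n)) by (intro n; apply Hf).
    split; auto.
    destruct H1 as [_ [_ [S1 _]]], H2 as [_ [_ [S2 _]]].
    specialize (S1 f Hmeas Hd).
    replace (fun n => m1 (f n)) with (fun n => m2 (f n)) in S1
      by (apply functional_extensionality; intro n; symmetry; apply Hf).
    exact (uniqueness_sum _ _ _ S1 (S2 f Hmeas Hd)).
Qed.

End SubProbability.

Section Words.
Context {A : Type}.

Lemma wcons_inj (a b : A) y z : wcons a y = wcons b z -> a = b /\ y = z.
Proof.
  destruct y as [v|s], z as [u|t]; simpl; intro H; try discriminate; injection H.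
  - intros -> ->; auto.
  - intro Hs; split; [exact (f_equal (fun g => g O) Hs)|].
    f_equal; apply functional_extensionality; intro k; exact (f_equal (fun g => g (S k)) Hs).
Qed.

Lemma wprepend_app (u v : list A) y : wprepend (u ++ v) y = wprepend u (wprepend v y).
Proof. apply fold_right_app. Qed.

Lemma wprepend_prefix_comparable (u v : list A) y z : wprepend u y = wprepend v z ->
  (exists w, u = v ++ w) \/ (exists w, v = u ++ w).
Proof.
  revert v; induction u as [|a u IH]; intros [|b v] H.
  - right; exists nil; auto.
  - right; eexists; reflexivity.
  - left; eexists; reflexivity.
  - apply wcons_inj in H as [-> H].
    destruct (IH v H) as [[w ->]|[w ->]]; [left | right]; exists w; auto.
Qed.

Lemma cylinder_nil : cylinder (@nil A) = @fullset A.
Proof.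
  apply wset_ext; intro x; unfold cylinder, fullset.
  split; [auto | intros _; exists x; reflexivity].
Qed.

Lemma cylinder_app (u w : list A) : setI (cylinder (u ++ w)) (cylinder u) = cylinder (u ++ w).
Proof.
  apply wset_ext; intro x; unfold setI, cylinder; split; [tauto|].
  intros [y ->]; split; [exists y | exists (wprepend w y)]; auto; apply wprepend_app.
Qed.

Lemma generator_setI (G H : wset A) : generator G -> generator H -> generator (setI G H).
Proof.
  assert (Hempty : forall S : wset A, (forall x, ~ S x) -> generator S).
  { intros S HS; left; apply wset_ext; intro x; split; [apply HS | intros []]. }
  assert (Hsingle : forall u (T : wset A), generator (setI (singleton u) T)).
  { intros u T; destruct (classic (T (inl u))) as [Hu|Hu].
    - right; left; exists u; apply wset_ext; intro x; unfold setI, singleton; split; [tauto|].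
      intros ->; auto.
    - apply Hempty; intros x [-> Hx]; auto. }
  assert (Hempty_setI : forall T : wset A, setI (@emptyset A) T = @emptyset A)
    by (intro; apply wset_ext; firstorder).
  intros [->|[[u ->]|[u ->]]] [->|[[v ->]|[v ->]]];
    rewrite ?Hempty_setI; try (rewrite setI_comm, Hempty_setI); try (left; reflexivity);
    try rewrite (setI_comm (cylinder u) (singleton v)); auto.
  destruct (classic (exists w, u = v ++ w)) as [[w ->]|Nuv].
  { rewrite cylinder_app; right; right; eauto. }
  destruct (classic (exists w, v = u ++ w)) as [[w ->]|Nvu].
  { rewrite setI_comm, cylinder_app; right; right; eauto. }
  apply Hempty; intros x [[y ->] [z Hz]].
  destruct (wprepend_prefix_comparable _ _ _ _ Hz); auto.
Qed.

Lemma prefix_set_emptyset (a : A) : prefix_set a (@emptyset A) = @emptyset A.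
Proof. apply wset_ext; intro x; unfold prefix_set; firstorder. Qed.

Lemma prefix_set_singleton (a : A) w : prefix_set a (singleton w) = singleton (a :: w).
Proof.
  apply wset_ext; intro x; unfold prefix_set, singleton; split.
  - intros [y [-> ->]]; reflexivity.
  - intros ->; exists (inl w); split; reflexivity.
Qed.

Lemma prefix_set_cylinder (a : A) w : prefix_set a (cylinder w) = cylinder (a :: w).
Proof.
  apply wset_ext; intro x; unfold prefix_set, cylinder; split.
  - intros [y [[z ->] ->]]; exists z; reflexivity.
  - intros [z ->]; exists (wprepend w z); split; [exists z|]; reflexivity.
Qed.

Lemma prefix_set_bigcup (a : A) (f : nat -> wset A) :
  prefix_set a (fun x => exists n, f n x) = (fun x => exists n, prefix_set a (f n) x).
Proof. apply wset_ext; intro x; unfold prefix_set; firstorder. Qed.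

Lemma prefix_set_setC (a : A) S :
  prefix_set a (fun x => ~ S x) = setI (cylinder (a :: nil)) (fun x => ~ prefix_set a S x).
Proof.
  apply wset_ext; intro x; unfold setI, prefix_set, cylinder; split.
  - intros [y [Hy ->]]; split; [exists y; auto|].
    intros [z [Hz Hyz]]; apply wcons_inj in Hyz as [_ <-]; auto.
  - intros [[z ->] Hn]; exists z; split; auto; intro Hz; apply Hn; exists z; auto.
Qed.

Lemma prefix_set_measurable (a : A) S : measurable S -> measurable (prefix_set a S).
Proof.
  pose proof (@measurable_sigma A) as HM; pose proof HM as [_ [HC HU]].
  intro HS; apply (HS (fun S => measurable (prefix_set a S))).
  - split; [|split].
    + rewrite prefix_set_emptyset; apply measurable_generator; left; auto.
    + intros T HT; rewrite prefix_set_setC.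
      apply sigma_setI; auto; apply measurable_generator; right; right; eauto.
    + intros f Hf; rewrite prefix_set_bigcup; auto.
  - intros G [->|[[w ->]|[w ->]]]; apply measurable_generator.
    + rewrite prefix_set_emptyset; left; auto.
    + rewrite prefix_set_singleton; right; left; eauto.
    + rewrite prefix_set_cylinder; right; right; eauto.
Qed.

Lemma mderiv_subprob (a : A) m : is_subprob m -> is_subprob (mderiv a m).
Proof.
  intro Hm; pose proof Hm as [H0 [Hpos [Hsum _]]]; unfold mderiv.
  split; [|split; [|split]].
  - rewrite prefix_set_emptyset; auto.
  - intros S HS; apply Hpos, prefix_set_measurable; auto.
  - intros f Hf Hd; rewrite prefix_set_bigcup.
    apply Hsum; [intro n; apply prefix_set_measurable; auto|].
    intros i j x Hij [y [Hy ->]] [z [Hz Hyz]]; apply wcons_inj in Hyz as [_ <-]; eauto.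
  - eapply Rle_trans; [apply subprob_le_fullset | apply Hm]; auto.
    apply prefix_set_measurable, sigma_fullset, measurable_sigma.
Qed.

End Words.

Section Coalgebra.
Context {A : Type}.

Definition measure_language (m : setfun A) : Omega A :=
  fun w => (m (cylinder w), m (singleton w)).

Lemma measure_language_coalg_morphism : is_coalg_morphism measure_language.
Proof.
  intros m _; split.
  - unfold measure_language; rewrite cylinder_nil; reflexivity.
  - intro a; apply functional_extensionality; intro w.
    unfold Lderiv, measure_language, mderiv.
    rewrite prefix_set_cylinder, prefix_set_singleton; reflexivity.
Qed.

Lemma coalg_morphism_measure_language phi : is_coalg_morphism phi ->
  forall m, is_subprob m -> phi m = measure_language m.
Proof.
  intros Hphi m Hm; apply functional_extensionality; intro w; revert m Hm.
  induction w as [|a w IH]; intros m Hm.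
  - unfold measure_language; rewrite cylinder_nil; apply Hphi; auto.
  - change (phi m (a :: w)) with (Lderiv a (phi m) w).
    rewrite (proj2 (Hphi m Hm) a), IH by (apply mderiv_subprob; auto).
    unfold measure_language, mderiv; rewrite prefix_set_cylinder, prefix_set_singleton.
    reflexivity.
Qed.

Lemma measure_language_inj m1 m2 : is_subprob m1 -> is_subprob m2 ->
  measure_language m1 = measure_language m2 -> forall S, measurable S -> m1 S = m2 S.
Proof.
  intros H1 H2 E.
  assert (Hgen : forall G, generator G -> m1 G = m2 G).
  { intros G [->|[[w ->]|[w ->]]].
    - destruct H1 as [-> _], H2 as [-> _]; reflexivity.
    - exact (f_equal (fun L => snd (L w)) E).
    - exact (f_equal (fun L => fst (L w)) E). }
  assert (Hfull : m1 (@fullset A) = m2 (@fullset A)).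
  { rewrite <- cylinder_nil; apply Hgen; right; right; eauto. }
  intros S HS.
  apply (pi_lambda (@generator_setI A) (subprob_agreement_dynkin H1 H2 Hfull)); auto.
  intros G HG; split; auto; apply measurable_generator; auto.
Qed.

End Coalgebra.

Theorem mainTheorem9 (A : Type) (HA : exists l : list A, forall a : A, In a l) :
  (exists phi : setfun A -> Omega A, is_coalg_morphism phi) /\
  (forall phi : setfun A -> Omega A, is_coalg_morphism phi ->
     forall m1 m2 : setfun A, is_subprob m1 -> is_subprob m2 ->
       phi m1 = phi m2 ->
       forall S : wset A, measurable S -> m1 S = m2 S).
Proof.
  split.
  - exists measure_language; apply measure_language_coalg_morphism.
  - intros phi Hphi m1 m2 H1 H2 E.
    apply measure_language_inj; auto.
    rewrite <- !(coalg_morphism_measure_language Hphi); auto.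
Qed.
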